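(* Let $r\ge4$ and $s\in\{2,\dots,r-1\}$, and let $A=\{a_1,\dots,a_s\}$ and $B=\{b_1,\dots,b_s\}$ be two different $s$-partitions of $r$. Then the graphs $\widehat K_r(A)$ and $\widehat K_r(B)$ are non-isomorphic, and they are isospectral both for the standard Laplacian and for the signless standard Laplacian.
   Context: An $s$-partition of $r\in\mathbb N$ is a multiset $\{a_1,\dots,a_s\}$ of positive integers with $a_1+\dots+a_s=r$. $\widehat K_r$ is the graph obtained from the complete graph $K_r$ (vertices $w_1,\dots,w_r$) by attaching a pendant vertex $v_i$ to each $w_i$ via an edge $\{w_i,v_i\}$. For an $s$-partition $A=\{a_1,\dots,a_s\}$ of $r$, $\widehat K_r(A)$ is the quotient graph obtained from $\widehat K_r$ by contracting (identifying) the vertex sets $\{v_1,\dots,v_{a_1}\}$, $\{v_{a_1+1},\dots,v_{a_1+a_2}\}$, …, $\{v_{a_1+\dots+a_{s-1}+1},\dots,v_r\}$ each into a single vertex, keeping all edges; thus $\widehat K_r(A)$ consists of $K_r$ together with $s$ further vertices, the $j$-th adjacent exactly to the $a_j$ vertices $w_i$ of the $j$-th block. The standard Laplacian is $(\Delta_G f)(v)=f(v)-\frac{1}{\deg v}\sum_{u\in N_v}f(u)$ and the signless standard Laplacian is $(\Delta_{G^+}f)(v)=f(v)+\frac{1}{\deg v}\sum_{u\in N_v}f(u)$ (equivalently $I\mp D^{-1/2}AD^{-1/2}$). Two graphs are isospectral for an operator if the operators have the same eigenvalues with multiplicities. *)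

From HB Require Import structures.
From mathcomp Require Import all_boot all_order all_algebra.
Set Implicit Arguments. Unset Strict Implicit. Unset Printing Implicit Defensive.
Import Order.TTheory GRing.Theory Num.Theory.

(* An s-partition of r, represented by a sequence [a_1; ...; a_s] of positive
   integers summing to r.  As a multiset it is determined up to perm_eq. *)
Definition is_partition (r s : nat) (A : seq nat) : bool :=
  [&& size A == s, all (fun a => 0 < a) A & sumn A == r].

(* vertex index i (0 <= i < r) of w_{i+1} lies in the j-th block (0-based) *)
Definition inblock (A : seq nat) (j i : nat) : bool :=
  (sumn (take j A) <= i) && (i < sumn (take j.+1 A)).

(* The graph \widehat K_r(A) on the vertex set 'I_(r+s):
   vertices 0..r-1 are w_1..w_r (forming K_r), vertices r..r+s-1 are the
   s contracted pendant vertices, the j-th adjacent exactly to the w_i of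
   the j-th block. *)
Definition Khat (r s : nat) (A : seq nat) : rel 'I_(r + s) :=
  fun x y =>
    match split x, split y with
    | inl i, inl j => i != j
    | inl i, inr j => inblock A j i
    | inr j, inl i => inblock A j i
    | inr _, inr _ => false
    end.

Definition graph_iso (T1 T2 : finType) (e1 : rel T1) (e2 : rel T2) : Prop :=
  exists f : T1 -> T2, bijective f /\ forall x y, e2 (f x) (f y) = e1 x y.

Definition deg (T : finType) (e : rel T) (x : T) : nat := #|[set y | e x y]|.

Local Open Scope ring_scope.

(* matrix of the standard Laplacian  f(v) - 1/deg v * sum_{u ~ v} f(u),
   i.e. I - D^{-1} A_G *)
Definition std_laplacian (R : fieldType) (n : nat) (e : rel 'I_n) : 'M[R]_n :=
  \matrix_(x, y) ((x == y)%:R - (e x y)%:R / (deg e x)%:R).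

Definition signless_std_laplacian (R : fieldType) (n : nat) (e : rel 'I_n) : 'M[R]_n :=
  \matrix_(x, y) ((x == y)%:R + (e x y)%:R / (deg e x)%:R).

(* isospectral: same eigenvalues with (algebraic) multiplicities,
   i.e. equal characteristic polynomials *)
Definition isospectral (R : fieldType) (n : nat) (M N : 'M[R]_n) : Prop :=
  char_poly M = char_poly N.

Arguments Khat r s A : clear implicits.
Arguments std_laplacian R {n} e.
Arguments signless_std_laplacian R {n} e.

From HB Require Import structures.
From mathcomp Require Import all_boot all_order all_algebra.
From mathcomp Require Import zify lra ring.
Set Implicit Arguments. Unset Strict Implicit. Unset Printing Implicit Defensive.

(* Every vertex w_i has degree r, while the j-th contracted vertex has degree
   a_j, so the degree multiset of \widehat K_r(A) is r copies of r together
   with A, and an isomorphism forces A = B as multisets.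

   For the spectra, both Laplacians are affine in the random-walk matrix
   P = D^-1 A_G, which has block form [[(J - I)/r, L/r], [U, 0]], where L is
   the r x s block-incidence matrix and U its transpose with row j divided by
   a_j.  Then U L = I and J = L (1 a^T) U, so a Schur complement followed by
   two applications of det(c - X Y) = c^(m-n) det(c - Y X) reduces
   det(y - P) to a rank-one determinant involving A only through
   a_1 + ... + a_s = r. *)

Lemma sumn_take_mono (A : seq nat) j k :
  j <= k -> sumn (take j A) <= sumn (take k A).
Proof. by move=> le_jk; rewrite -(subnKC le_jk) takeD sumn_cat leq_addr. Qed.

Lemma inblock_uniq (A : seq nat) j k i : inblock A j i -> inblock A k i -> j = k.
Proof.
rewrite /inblock => /andP[ge_j lt_j] /andP[ge_k lt_k].
by case: (ltngtP j k) => // lt_jk; have := sumn_take_mono A lt_jk; lia.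
Qed.

Lemma inblock_exists (A : seq nat) i : i < sumn A ->
  exists2 j, j < size A & inblock A j i.
Proof.
move=> lt_i; have ex_j : exists j, i < sumn (take j.+1 A).
  by exists (size A); rewrite take_oversize.
have [j lt_ij min_j] := ex_minnP ex_j.
have lt_jA : j < size A.
  rewrite ltnNge; apply/negP => le_Aj.
  have A_gt0 : 0 < size A by case: A lt_i {ex_j lt_ij min_j le_Aj}.
  by have := min_j (size A).-1; rewrite prednK // take_size => /(_ lt_i); lia.
exists j => //; rewrite /inblock lt_ij andbT.
case: j lt_ij min_j lt_jA => [|j] _ min_j _; first by rewrite take0.
by rewrite leqNgt; apply/negP => /min_j; lia.
Qed.

Lemma sum_inblock (A : seq nat) j : j < size A ->
  \sum_(i < sumn A) (inblock A j i : nat) = nth 0 A j.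
Proof.
move=> lt_jA; rewrite -(big_mkord xpredT (fun i => (inblock A j i : nat))).
set m := sumn (take j A).
have takeS : sumn (take j.+1 A) = m + nth 0 A j by rewrite (take_nth 0) // sumn_rcons.
have le_end : m + nth 0 A j <= sumn A by rewrite -takeS -{2}(take_size A) sumn_take_mono.
rewrite (@big_cat_nat _ _ _ m) ?(leq_trans (leq_addr _ _) le_end) //=.
rewrite (@big_cat_nat _ _ _ (m + nth 0 A j) m) ?leq_addr //=.
rewrite big_nat_cond big1 ?add0n => [|i /andP[/andP[_ lt_im] _]]; last first.
  by rewrite /inblock -/m leqNgt lt_im.
rewrite [X in _ + X]big_nat_cond [X in _ + X]big1 ?addn0 => [|i]; last first.
  by case/andP=> /andP[ge_i _] _; rewrite /inblock takeS ltnNge ge_i andbF.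
rewrite big_nat_cond (eq_bigr (fun _ => 1)) => [|i /andP[/andP[ge_i lt_i] _]].
  by rewrite -big_nat_cond sum_nat_const_nat muln1 addKn.
by rewrite /inblock takeS ge_i lt_i.
Qed.

Lemma degE (T : finType) (e : rel T) x : deg e x = \sum_y (e x y : nat).
Proof. by rewrite /deg -sum1dep_card big_mkcond. Qed.

Lemma deg_iso (T1 T2 : finType) (e1 : rel T1) (e2 : rel T2) (f : T1 -> T2) :
  bijective f -> (forall x y, e2 (f x) (f y) = e1 x y) ->
  forall x, deg e2 (f x) = deg e1 x.
Proof.
move=> [g fK gK] ef x; rewrite !degE (reindex f) /=.
  by apply: eq_bigr => y _; rewrite ef.
by exists g => y _; [exact: fK | exact: gK].
Qed.

Section Partition.
Variables (r s : nat) (A : seq nat).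
Hypothesis partA : is_partition r s A.

Lemma partition_size : size A = s.
Proof. by case/and3P: partA => /eqP. Qed.

Lemma partition_sum : sumn A = r.
Proof. by case/and3P: partA => _ _ /eqP. Qed.

Lemma partition_gt0 (j : 'I_s) : 0 < nth 0 A j.
Proof.
case/and3P: partA => /eqP sizeA /allP A_gt0 _.
by apply/A_gt0/mem_nth; rewrite sizeA.
Qed.

Lemma sum_inblock_partition (i : 'I_r) : \sum_(j < s) (inblock A j i : nat) = 1.
Proof.
have [j0 lt_j0 i_j0] : exists2 j, j < size A & inblock A j i.
  by apply: inblock_exists; rewrite partition_sum.
rewrite partition_size in lt_j0.
rewrite (bigD1 (Ordinal lt_j0)) //= i_j0 big1 // => j ne_j.
apply/eqP; rewrite eqb0; apply: contra ne_j => i_j.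
by apply/eqP/val_inj/(inblock_uniq i_j).
Qed.

Lemma Khat_ww i k : Khat r s A (lshift s i) (lshift s k) = (i != k).
Proof. by rewrite /Khat !(unsplitK (inl _ _)). Qed.

Lemma Khat_wv i j : Khat r s A (lshift s i) (rshift r j) = inblock A j i.
Proof. by rewrite /Khat (unsplitK (inl _ _)) (unsplitK (inr _ _)). Qed.

Lemma Khat_vw j i : Khat r s A (rshift r j) (lshift s i) = inblock A j i.
Proof. by rewrite /Khat (unsplitK (inl _ _)) (unsplitK (inr _ _)). Qed.

Lemma Khat_vv j k : Khat r s A (rshift r j) (rshift r k) = false.
Proof. by rewrite /Khat !(unsplitK (inr _ _)). Qed.

Hypothesis r_gt0 : 0 < r.

Lemma deg_Khat_w i : deg (Khat r s A) (lshift s i) = r.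
Proof.
rewrite degE big_split_ord /=.
under eq_bigr do rewrite Khat_ww.
under [X in _ + X]eq_bigr do rewrite Khat_wv.
rewrite sum_inblock_partition (bigD1 i) //= eqxx add0n.
rewrite (eq_bigr (fun _ => 1)) => [|k ne_ki]; last by rewrite eq_sym ne_ki.
by rewrite sum1_card cardC1 card_ord addn1 prednK.
Qed.

Lemma deg_Khat_v j : deg (Khat r s A) (rshift r j) = nth 0 A j.
Proof.
rewrite degE big_split_ord /=.
under eq_bigr do rewrite Khat_vw.
under [X in _ + X]eq_bigr do rewrite Khat_vv.
by rewrite [X in _ + X]big1 // addn0 -partition_sum sum_inblock ?partition_size.
Qed.

Lemma card_deg_Khat d :
  \sum_x (deg (Khat r s A) x == d : nat) = (r == d) * r + count (pred1 d) A.
Proof.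
rewrite big_split_ord /=.
under eq_bigr do rewrite deg_Khat_w.
under [X in _ + X]eq_bigr do rewrite deg_Khat_v.
rewrite sum_nat_const card_ord mulnC; congr (_ + _).
rewrite -sum1_count big_mkcond (big_nth 0) partition_size big_mkord.
by rewrite [RHS]big_mkcond; apply: eq_bigr => j _ /=; case: (_ == _).
Qed.

End Partition.

Lemma Khat_not_iso r s A B : 0 < r -> is_partition r s A -> is_partition r s B ->
  ~ perm_eq A B -> ~ graph_iso (Khat r s A) (Khat r s B).
Proof.
move=> r_gt0 partA partB neAB [f [bij_f ef]]; apply: neAB.
have [g fK gK] := bij_f.
apply/allP => d _; apply/eqP/(@addnI ((r == d) * r)).
rewrite -(card_deg_Khat partA) // -(card_deg_Khat partB) // [RHS](reindex f) /=.
  by apply: eq_bigr => x _; rewrite (deg_iso bij_f ef).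
by exists g => y _; [exact: fK | exact: gK].
Qed.

Import GRing.Theory Num.Theory.
Local Open Scope ring_scope.

Lemma det1D_mulmxC (R : comNzRingType) m n (X : 'M[R]_(m, n)) (Y : 'M[R]_(n, m)) :
  \det (1%:M + X *m Y) = \det (1%:M + Y *m X).
Proof.
have lower : block_mx 1%:M (- X) Y 1%:M =
    block_mx 1%:M 0 Y 1%:M *m block_mx 1%:M (- X) 0 (1%:M + Y *m X).
  rewrite mulmx_block !(mul1mx, mul0mx, mulmx1, mulmx0, addr0, add0r).
  by rewrite mulmxN addrC addrK.
have upper : block_mx 1%:M (- X) Y 1%:M =
    block_mx 1%:M (- X) 0 1%:M *m block_mx (1%:M + X *m Y) 0 Y 1%:M.
  rewrite mulmx_block !(mul1mx, mul0mx, mulmx1, mulmx0, addr0, add0r).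
  by rewrite mulNmx addrK.
have := congr1 determinant lower; rewrite upper !det_mulmx.
by rewrite det_lblock !det_ublock det_lblock !det1 !mul1r !mulr1.
Qed.

Lemma det_scalar_subC (R : fieldType) m n (c : R) (X : 'M[R]_(m, n)) (Y : 'M[R]_(n, m)) :
  c != 0 -> \det (c%:M - X *m Y) = c ^+ m * \det (1%:M - c^-1 *: (Y *m X)).
Proof.
move=> c0; have -> : c%:M - X *m Y = c%:M *m (1%:M + X *m (- c^-1 *: Y)).
  by rewrite mulmxDr mulmx1 mul_scalar_mx -scalemxAr scalerA mulrN divff // scaleN1r.
by rewrite det_mulmx det_scalar det1D_mulmxC -scalemxAl scaleNr.
Qed.

Lemma det_block_scalar (R : fieldType) m n (X : 'M[R]_m) (Y : 'M[R]_(m, n))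
    (Z : 'M[R]_(n, m)) (c : R) :
  c != 0 -> \det (block_mx X Y Z c%:M) = c ^+ n * \det (X - c^-1 *: (Y *m Z)).
Proof.
move=> c0; have -> : block_mx X Y Z c%:M =
    block_mx 1%:M (c^-1 *: Y) 0 1%:M *m block_mx (X - c^-1 *: (Y *m Z)) 0 Z c%:M.
  rewrite mulmx_block !(mul1mx, mul0mx, mulmx1, mulmx0, addr0, add0r).
  by rewrite -scalemxAl subrK -scalemxAl mul_mx_scalar scalerA mulVf // scale1r.
by rewrite det_mulmx det_ublock det_lblock !det1 det_scalar mulr1 mul1r mulrC.
Qed.

Lemma horner_char_poly (R : comNzRingType) n (M : 'M[R]_n) x :
  (char_poly M).[x] = \det (x%:M - M).
Proof.
rewrite -horner_evalE -det_map_mx; congr (\det _); apply/matrixP => i j.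
by rewrite !mxE rmorphB rmorphMn /= !horner_evalE hornerX hornerC.
Qed.

Lemma poly_eq_ge1 (R : numDomainType) (p q : {poly R}) :
  (forall x, 1 <= x -> p.[x] = q.[x]) -> p = q.
Proof.
move=> epq; apply/eqP; rewrite -subr_eq0; apply/eqP.
apply: (@roots_geq_poly_eq0 _ _ [seq k.+1%:R | k <- iota 0 (size (p - q))]).
- apply/allP => _ /mapP[k _ ->].
  by rewrite /root hornerD hornerN epq ?subrr ?ler1n.
- by rewrite map_inj_uniq ?iota_uniq // => i j /eqP; rewrite eqr_nat => /eqP [].
- by rewrite size_map size_iota.
Qed.

Lemma char_poly_affine (R : numFieldType) n (M N : 'M[R]_n) (a b : R) :
  b != 0 -> char_poly M = char_poly N ->
  char_poly (a%:M + b *: M) = char_poly (a%:M + b *: N).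
Proof.
move=> b0 eMN; apply: poly_eq_ge1 => y _; rewrite !horner_char_poly.
suff affineE (P : 'M_n) :
    \det (y%:M - (a%:M + b *: P)) = b ^+ n * (char_poly P).[(y - a) / b].
  by rewrite !affineE eMN.
rewrite horner_char_poly -detZ; congr (\det _); apply/matrixP => i j; rewrite !mxE.
by case: (i == j); rewrite /= ?mulr1n ?mulr0n; field.
Qed.

Definition transition_mx (R : fieldType) n (e : rel 'I_n) : 'M[R]_n :=
  \matrix_(x, y) ((e x y)%:R / (deg e x)%:R).

Lemma std_laplacianE (R : fieldType) n (e : rel 'I_n) :
  std_laplacian R e = 1%:M - transition_mx R e.
Proof. by apply/matrixP => x y; rewrite !mxE. Qed.

Lemma signless_std_laplacianE (R : fieldType) n (e : rel 'I_n) :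
  signless_std_laplacian R e = 1%:M + transition_mx R e.
Proof. by apply/matrixP => x y; rewrite !mxE. Qed.

(* c is the scalar left by the Schur complement, b the one left by the rank-one
   step; the expression is valid for y >= 1, where y, c and b are nonzero. *)
Definition Khat_det (R : fieldType) (r s : nat) (y : R) : R :=
  let c := y + r%:R^-1 in
  let b := 1 - (c * (r%:R * y))^-1 in
  y ^+ s * c ^+ r * b ^+ s * (1 - (b * c)^-1).

Section TransitionDet.
Variables (R : realFieldType) (r s : nat) (A : seq nat).
Hypotheses (partA : is_partition r s A) (r_gt0 : (0 < r)%N).

Definition blocks_indicator : 'M[R]_(r, s) := \matrix_(i, j) (inblock A j i)%:R.

Definition blocks_average : 'M[R]_(s, r) :=
  \matrix_(j, i) ((inblock A j i)%:R / (nth 0 A j)%:R).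

Definition block_sizes_mx : 'M[R]_s := const_mx 1 *m \row_j (nth 0 A j)%:R.

Lemma block_size_neq0 (j : 'I_s) : (nth 0 A j)%:R != 0 :> R.
Proof. by rewrite pnatr_eq0 -lt0n (partition_gt0 partA). Qed.

Lemma transition_Khat : transition_mx R (Khat r s A) =
  block_mx (r%:R^-1 *: (const_mx 1 - 1%:M)) (r%:R^-1 *: blocks_indicator)
           blocks_average 0.
Proof.
apply/matrixP => x y.
case: (split_ordP x) => i ->; case: (split_ordP y) => k ->.
- rewrite block_mxEul !mxE Khat_ww deg_Khat_w //.
  by case: (i == k); rewrite /= ?subrr ?subr0 ?mulr0 ?mul0r ?mulr1 ?mul1r.
- by rewrite block_mxEur !mxE Khat_wv deg_Khat_w // mulrC.
- by rewrite block_mxEdl !mxE Khat_vw deg_Khat_v.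
- by rewrite block_mxEdr !mxE Khat_vv mul0r.
Qed.

Lemma blocks_averageK : blocks_average *m blocks_indicator = 1%:M.
Proof.
apply/matrixP => j k; rewrite !mxE; case: (eqVneq j k) => [<-|ne_jk] /=.
  under eq_bigr do rewrite !mxE mulrAC -natrM mulnb andbb.
  rewrite -mulr_suml -natr_sum -(partition_sum partA) sum_inblock.
    by rewrite divff // block_size_neq0.
  by rewrite (partition_size partA).
apply: big1 => i _; rewrite !mxE.
case j_i: (inblock A j i); case k_i: (inblock A k i); rewrite ?mul0r ?mulr0 //.
by case/eqP: ne_jk; apply/val_inj/(inblock_uniq j_i k_i).
Qed.

Lemma blocks_indicator_sizes_average :
  blocks_indicator *m block_sizes_mx *m blocks_average = const_mx 1.
Proof.
have row_sizes i (l : 'I_s) :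
    (blocks_indicator *m block_sizes_mx) i l = (nth 0 A l)%:R.
  rewrite !mxE; under eq_bigr do rewrite !mxE big_ord1 !mxE mul1r.
  by rewrite -mulr_suml -natr_sum sum_inblock_partition // mul1r.
apply/matrixP => i k; rewrite !mxE.
under eq_bigr do rewrite row_sizes !mxE mulrCA divff ?block_size_neq0 // mulr1.
by rewrite -natr_sum sum_inblock_partition.
Qed.

Lemma sum_block_sizes : \sum_(j < s) (nth 0 A j)%:R = r%:R :> R.
Proof.
rewrite -natr_sum -(partition_sum partA) sumnE (big_nth 0).
by rewrite (partition_size partA) big_mkord.
Qed.

Lemma det_transition_Khat (y : R) : 1 <= y ->
  \det (y%:M - transition_mx R (Khat r s A)) = Khat_det r s y.
Proof.
move=> y_ge1; rewrite /Khat_det.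
set c := y + r%:R^-1; set b := 1 - (c * (r%:R * y))^-1.
have r_pos : 0 < r%:R :> R by rewrite ltr0n.
have r0 : r%:R != 0 :> R by apply: lt0r_neq0.
have y0 : y != 0 by apply: lt0r_neq0; lra.
have c_pos : 0 < c by rewrite /c; apply: ltr_wpDl; [lra | rewrite invr_gt0].
have c0 : c != 0 by apply: lt0r_neq0.
have b0 : b != 0.
  have cry_gt1 : 1 < c * (r%:R * y).
    have r_ge1 : 1 <= r%:R :> R by rewrite ler1n.
    rewrite /c mulrDl; apply: ltr_pwDr; last by nra.
    by rewrite mulrA mulVf ?mul1r ?lt0r_neq0 //; lra.
  by apply: lt0r_neq0; rewrite subr_gt0 invf_lt1 //; lra.
rewrite transition_Khat (scalar_mx_block r s y) opp_block_mx add_block_mx.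
rewrite oppr0 addr0 det_block_scalar // !sub0r mulNmx mulmxN opprK -scalemxAl.
set L := blocks_indicator; set U := blocks_average; set W := block_sizes_mx.
have schurE :
    y%:M - r%:R^-1 *: (const_mx 1 - 1%:M) - y^-1 *: (r%:R^-1 *: (L *m U)) =
    c%:M - L *m ((r%:R^-1 *: W + (r%:R^-1 * y^-1)%:M) *m U).
  rewrite -blocks_indicator_sizes_average -/L -/W -/U [in RHS]mulmxA.
  rewrite mulmxDr mulmxDl mul_mx_scalar -scalemxAr -!scalemxAl.
  apply/matrixP => i j; rewrite !mxE.
  by case: (i == j); rewrite /= ?mulr1n ?mulr0n /c; ring.
rewrite schurE det_scalar_subC // -mulmxA blocks_averageK mulmx1.
have rank1E : 1%:M - c^-1 *: (r%:R^-1 *: W + (r%:R^-1 * y^-1)%:M) =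
    b%:M - const_mx (c^-1 * r%:R^-1) *m \row_j (nth 0 A j)%:R.
  apply/matrixP => i j; rewrite !mxE !big_ord1 !mxE.
  by case: (i == j); rewrite /= ?mulr1n ?mulr0n /b; field; rewrite ?r0 ?c0 ?y0.
rewrite rank1E det_scalar_subC // det_mx11 !mxE.
under eq_bigr do rewrite !mxE.
by rewrite -mulr_suml sum_block_sizes eqxx /=; field; rewrite ?r0 ?c0 ?b0.
Qed.

End TransitionDet.

Local Close Scope ring_scope.

Theorem mainTheorem5 (R : realFieldType) (r s : nat) (A B : seq nat) :
  4 <= r -> 2 <= s <= r.-1 ->
  is_partition r s A -> is_partition r s B -> ~ perm_eq A B ->
  ~ graph_iso (Khat r s A) (Khat r s B) /\
  isospectral (std_laplacian R (Khat r s A)) (std_laplacian R (Khat r s B)) /\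
  isospectral (signless_std_laplacian R (Khat r s A))
              (signless_std_laplacian R (Khat r s B)).
Proof.
move=> r_ge4 _ partA partB neAB.
have r_gt0 : 0 < r by apply: leq_trans r_ge4.
have transition_iso : char_poly (transition_mx R (Khat r s A)) =
                      char_poly (transition_mx R (Khat r s B)).
  apply: poly_eq_ge1 => y y_ge1.
  by rewrite !horner_char_poly !det_transition_Khat.
split; first exact: Khat_not_iso.
rewrite /isospectral !std_laplacianE !signless_std_laplacianE.
split.
  by rewrite -!scaleN1r; apply: char_poly_affine; rewrite ?oppr_eq0 ?oner_eq0.
by have := char_poly_affine 1 (oner_neq0 R) transition_iso; rewrite !scale1r.
Qed.
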